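(* For every integer $j\ge0$, $$\int_0^\infty\frac{(\pi^2+t^2)^j}{e^t-1}\sin\!\left(2j\tan^{-1}\!\left(\frac t\pi\right)\right)dt=\frac{j\,\pi^{2j+1}}{2j+1}.$$ *)

From Stdlib Require Import Reals Lra.
Open Scope R_scope.

Definition improper_integral_0_inf (f : R -> R) (l : R) : Prop :=
  (forall a b : R, 0 < a -> a <= b -> inhabited (Riemann_integrable f a b)) /\
  (forall eps : R, eps > 0 ->
     exists d : R, d > 0 /\
     exists M : R, forall (a b : R) (pr : Riemann_integrable f a b),
       0 < a -> a < d -> M < b -> a <= b ->
       Rabs (RiemannInt pr - l) < eps).

(* The integrand is Im ((PI + i t) ^ (2 j)) / (e^t - 1).  Write 1 / (e^t - 1) as
   sum_(n = 1..N) e^(- n t) + e^(- N t) / (e^t - 1).  The n-th term integrates over (0, oo) to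
   (-1)^n int_0^PI x^(2 j) cos (n x) dx, the real part of Cauchy's theorem for z^(2 j) e^(i n z);
   here both sides are shown to obey the same recurrence in j by integrating by parts twice.
   Since sum_(n = 1..N) (-1)^n cos (n x) = (-1)^N cos ((N + 1/2) x) / (2 cos (x / 2)) - 1/2,
   these partial sums are int_0^PI (PI^(2 j) - x^(2 j)) / 2 dx = j PI^(2 j + 1) / (2 j + 1)
   up to an oscillatory integral, which is O(1 / N) because its amplitude is Lipschitz.  The
   remainder e^(- N t) / (e^t - 1) also contributes O(1 / N), and truncating the integral to
   [a, b] costs O(N (a + 1 / b)). *)

From Stdlib Require Import Reals Lra Lia Factorial.
From Coquelicot Require Import Coquelicot.
Open Scope R_scope.

Lemma ex_derive_continuous_R (f : R -> R) x : ex_derive f x -> continuous f x.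
Proof. apply (ex_derive_continuous (K:=R_AbsRing) (V:=R_NormedModule)). Qed.

Lemma ex_RInt_continuous_R (f : R -> R) a b : (forall x, continuous f x) -> ex_RInt f a b.
Proof. intros H. apply (ex_RInt_continuous (V:=R_CompleteNormedModule)). intros; apply H. Qed.

Lemma RInt_plus_R (f g : R -> R) a b : ex_RInt f a b -> ex_RInt g a b ->
  @eq R (RInt (fun x => f x + g x) a b) (RInt f a b + RInt g a b).
Proof. intros. apply (RInt_plus (V:=R_CompleteNormedModule)); auto. Qed.

Lemma RInt_scal_R (f : R -> R) a b c : ex_RInt f a b ->
  @eq R (RInt (fun x => c * f x) a b) (c * RInt f a b).
Proof. intros. apply (RInt_scal (V:=R_CompleteNormedModule)); auto. Qed.

Lemma RInt_ext_R (f g : R -> R) a b : (forall x, Rmin a b < x < Rmax a b -> f x = g x) ->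
  @eq R (RInt f a b) (RInt g a b).
Proof. intros. apply (RInt_ext (V:=R_CompleteNormedModule)); auto. Qed.

Lemma RInt_0_R a b : @eq R (RInt (fun _ => 0) a b) 0.
Proof. rewrite RInt_const. simpl. unfold scal; simpl. unfold mult; simpl. ring. Qed.

Lemma RInt_Chasles_R (f : R -> R) a b c : (forall x, continuous f x) ->
  @eq R (RInt f a b + RInt f b c) (RInt f a c).
Proof. intros. apply (RInt_Chasles (V:=R_CompleteNormedModule)); apply ex_RInt_continuous_R; auto.
Qed.

Lemma RInt_primitive (f F : R -> R) a b :
  (forall x, is_derive F x (f x)) -> (forall x, continuous f x) -> @eq R (RInt f a b) (F b - F a).
Proof.
  intros HD Hf. apply (is_RInt_unique (V:=R_CompleteNormedModule)).
  apply (is_RInt_derive (V:=R_CompleteNormedModule)); intros; auto.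
Qed.

Lemma RInt_primitive_plus_scal (f g F : R -> R) c a b :
  (forall x, is_derive F x (f x + c * g x)) -> (forall x, continuous f x) ->
  (forall x, continuous g x) -> @eq R (RInt f a b + c * RInt g a b) (F b - F a).
Proof.
  intros HD Hf Hg.
  assert (Hcg : forall x, continuous (fun x => c * g x) x)
    by (intro x; apply (continuous_scal_r c g); auto).
  rewrite <- RInt_scal_R, <- RInt_plus_R by (apply ex_RInt_continuous_R; auto).
  apply RInt_primitive; auto. intro x. apply (continuous_plus f (fun x => c * g x)); auto.
Qed.

Lemma lipschitz_continuous (g : R -> R) L x :
  0 <= L -> (forall x z, Rabs (g x - g z) <= L * Rabs (x - z)) -> continuous g x.
Proof.
  intros HL H. apply continuity_pt_filterlim. intros eps Heps.
  exists (eps / (L + 1)). split; [apply Rdiv_lt_0_compat; lra|].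
  intros y [_ Hy]. simpl in *. unfold R_dist in *.
  apply Rle_lt_trans with ((L + 1) * Rabs (y - x)).
  - eapply Rle_trans; [apply H|]. apply Rmult_le_compat_r; [apply Rabs_pos | lra].
  - apply Rmult_lt_reg_l with (/ (L + 1)); [apply Rinv_0_lt_compat; lra|].
    rewrite <- Rmult_assoc, Rinv_l, Rmult_1_l by lra. rewrite Rmult_comm. exact Hy.
Qed.

Lemma Rabs_triang3 a b c : Rabs (a + b - c) <= Rabs a + Rabs b + Rabs c.
Proof.
  unfold Rminus. eapply Rle_trans; [apply Rabs_triang|]. rewrite Rabs_Ropp.
  pose proof (Rabs_triang a b). lra.
Qed.

Lemma exp_le_compat x y : x <= y -> exp x <= exp y.
Proof. intros [H|H]; [apply Rlt_le, exp_increasing, H | subst; lra]. Qed.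

Lemma pow_le_fact_mul_exp x m : 0 <= x -> x ^ m <= INR (fact m) * exp x.
Proof.
  intros Hx. assert (Hf : 0 < INR (fact m)) by apply INR_fact_lt_0.
  assert (T : x ^ m / INR (fact m) <= exp x).
  { eapply Rle_trans; [|exact (exp_ge_taylor x m Hx)]. destruct m as [|m]; [simpl; lra|].
    rewrite tech5. enough (0 <= sum_f_R0 (fun k => x ^ k / INR (fact k)) m) by lra.
    apply cond_pos_sum. intro k. apply Rmult_le_pos; [apply pow_le; lra|].
    apply Rlt_le, Rinv_0_lt_compat, INR_fact_lt_0. }
  apply Rmult_le_reg_r with (/ INR (fact m)); [apply Rinv_0_lt_compat; lra|].
  rewrite (Rmult_comm (INR (fact m))), Rmult_assoc, Rinv_r, Rmult_1_r by lra. exact T.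
Qed.

Lemma exp_neg_mul_pow_le a b m : 0 <= a -> 0 < b ->
  exp (- b) * (a + b) ^ m <= INR (fact (S m)) * exp a / b.
Proof.
  intros Ha Hb. pose proof (pow_le_fact_mul_exp (a + b) (S m) ltac:(lra)) as Hp.
  rewrite exp_plus in Hp. simpl pow in Hp.
  assert (Hf : 0 < INR (fact (S m)) * exp a)
    by (apply Rmult_lt_0_compat; [apply INR_fact_lt_0 | apply exp_pos]).
  assert (H1 : exp (- b) * (a + b) ^ m * (a + b) <= INR (fact (S m)) * exp a).
  { apply Rmult_le_reg_l with (exp b); [apply exp_pos|].
    replace (exp b * (exp (- b) * (a + b) ^ m * (a + b)))
      with ((a + b) * (a + b) ^ m * (exp b * exp (- b))) by ring.
    rewrite <- exp_plus, Rplus_opp_r, exp_0. lra. }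
  apply Rle_trans with (INR (fact (S m)) * exp a / (a + b)).
  - apply Rmult_le_reg_r with (a + b); [lra|].
    replace (INR (fact (S m)) * exp a / (a + b) * (a + b)) with (INR (fact (S m)) * exp a)
      by (field; lra).
    exact H1.
  - apply Rmult_le_compat_l; [lra|]. apply Rinv_le_contravar; lra.
Qed.

Lemma RInt_exp_neg_le C c a b : 0 <= C -> 0 < c -> 0 <= a <= b ->
  RInt (fun t => C * exp (- (c * t))) a b <= C / c.
Proof.
  intros HC Hc Hab.
  rewrite (RInt_primitive _ (fun t => - C * exp (- (c * t)) / c)).
  - assert (exp (- (c * a)) <= 1) by (rewrite <- exp_0; apply exp_le_compat; nra).
    pose proof (exp_pos (- (c * b))).
    assert (0 <= C * exp (- (c * b)) / c) by (apply Rdiv_le_0_compat; [apply Rmult_le_pos|]; lra).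
    assert (C * exp (- (c * a)) / c <= C / c)
      by (apply Rmult_le_compat_r; [apply Rlt_le, Rinv_0_lt_compat; lra | nra]).
    unfold Rdiv in *. lra.
  - intro x. auto_derive; [exact I|]. field. lra.
  - intro x. apply ex_derive_continuous_R. auto_derive. auto.
Qed.

Lemma improper_integral_0_inf_of_bound (f : R -> R) l C K : 0 <= C -> 0 <= K ->
  (forall a b, 0 < a -> a <= b -> ex_RInt f a b) ->
  (forall N a b, (2 <= N)%nat -> 0 < a <= 1 -> a <= b ->
     Rabs (RInt f a b - l) <= INR N * K * (a + / b) + C / (INR N - 1)) ->
  improper_integral_0_inf f l.
Proof.
  intros HC HK Hint Hbound. split.
  { intros a b Ha Hab. constructor. apply ex_RInt_Reals_0, Hint; assumption. }
  intros eps Heps.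
  destruct (INR_unbounded (2 + 3 * C / eps)) as [N HN].
  assert (HCe : 0 <= 3 * C / eps) by (apply Rdiv_le_0_compat; lra).
  assert (HN2 : (2 <= N)%nat) by (apply INR_le; simpl; lra).
  assert (HCN : C / (INR N - 1) < eps / 3).
  { apply Rmult_lt_reg_r with (INR N - 1); [lra|].
    replace (C / (INR N - 1) * (INR N - 1)) with C by (field; lra).
    apply Rmult_lt_compat_l with (r := eps / 3) in HN; [|lra].
    replace (eps / 3 * (2 + 3 * C / eps)) with (2 * eps / 3 + C) in HN by (field; lra). lra. }
  set (A := INR N * K + 1).
  assert (HA : 1 <= A) by (unfold A; pose proof (pos_INR N); nra).
  exists (Rmin 1 (eps / (3 * A))). split; [apply Rmin_pos; [lra | apply Rdiv_lt_0_compat; lra]|].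
  exists (3 * A / eps). intros a b pr Ha Had Hb Hab.
  pose proof (Rmin_l 1 (eps / (3 * A))). pose proof (Rmin_r 1 (eps / (3 * A))).
  rewrite <- RInt_Reals.
  eapply Rle_lt_trans; [apply Hbound; [exact HN2 | lra | lra]|].
  assert (HMb : 0 < 3 * A / eps) by (apply Rdiv_lt_0_compat; lra).
  assert (Ha3 : A * a < eps / 3).
  { apply Rlt_le_trans with (A * (eps / (3 * A))); [apply Rmult_lt_compat_l; lra|].
    right. field. lra. }
  assert (Hb3 : A * / b < eps / 3).
  { apply Rmult_lt_reg_r with b; [lra|]. rewrite Rmult_assoc, Rinv_l, Rmult_1_r by lra.
    apply Rmult_lt_compat_l with (r := eps / 3) in Hb; [|lra].
    replace (eps / 3 * (3 * A / eps)) with A in Hb by (field; lra). lra. }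
  assert (INR N * K * (a + / b) <= A * a + A * / b).
  { pose proof (pos_INR N). assert (0 < / b) by (apply Rinv_0_lt_compat; lra).
    unfold A. nra. }
  lra.
Qed.

Lemma PI_bounds : 3 < PI <= 4.
Proof. pose proof PI2_3_2; pose proof PI_4; lra. Qed.

(* cos (8/5) < 0 by its Taylor upper bound, so PI / 2 < 8 / 5. *)
Lemma PI_lt_16_5 : PI < 16 / 5.
Proof.
  destruct (pre_cos_bound (8/5) 0 ltac:(lra) ltac:(lra)) as [_ H2].
  unfold cos_approx, cos_term in H2. simpl sum_f_R0 in H2. cbn -[pow Rdiv] in H2.
  assert (Hc : cos (8/5) < 0) by (eapply Rle_lt_trans; [exact H2|]; simpl; lra).
  destruct (Rlt_or_le PI (16/5)) as [H|H]; [exact H|].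
  pose proof (cos_ge_0 (8/5) ltac:(lra) ltac:(lra)). lra.
Qed.

Lemma sin_taylor_bounds u : 0 <= u <= 2 -> u - u ^ 3 / 6 <= sin u <= u.
Proof.
  intros Hu. pose proof PI_bounds. destruct (sin_bound u 0 ltac:(lra) ltac:(lra)) as [H1 H2].
  unfold sin_approx, sin_term in H1, H2. simpl sum_f_R0 in H1, H2. cbn -[pow Rdiv] in H1, H2.
  split.
  - replace (u - u ^ 3 / 6)
      with (1 * (u * 1 / 1) + -1 * 1 * (u * (u * (u * 1)) / (1 + 1 + 1 + 1 + 1 + 1)))
        by (simpl; field).
    lra.
  - eapply Rle_trans; [apply H2|]. simpl.
    assert (0 <= u ^ 3 * (20 - u ^ 2)) by (apply Rmult_le_pos; [apply pow_le|]; simpl; nra).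
    simpl in H. field_simplify. nra.
Qed.

Lemma cos_taylor_lower u : 0 <= u <= 2 -> 1 - u ^ 2 / 2 <= cos u.
Proof.
  intros Hu. destruct (pre_cos_bound u 0 ltac:(lra) ltac:(lra)) as [H1 _].
  unfold cos_approx, cos_term in H1. simpl sum_f_R0 in H1. cbn -[pow Rdiv] in H1.
  replace (1 - u ^ 2 / 2) with (1 * (1 / 1) + -1 * 1 * (u * (u * 1) / (1 + 1))) by (simpl; field).
  lra.
Qed.

Lemma sin_small_bounds u : 0 < u <= 8 / 5 ->
  u / 2 <= sin u /\ Rabs (sin u - u * cos u) <= u ^ 3 / 2 /\ Rabs (u - sin u) <= u ^ 3 / 6.
Proof.
  intros Hu. destruct (sin_taylor_bounds u ltac:(lra)) as [S1 S2].
  pose proof (cos_taylor_lower u ltac:(lra)) as C1. pose proof (COS_bound u) as [_ C2].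
  assert (Hu3 : u ^ 3 = u * u * u) by (simpl; ring).
  assert (Hu2 : u ^ 2 = u * u) by (simpl; ring).
  rewrite Hu2 in C1. rewrite Hu3 in *.
  split; [nra|]. split; apply Rabs_le; split; nra.
Qed.

Definition clamp (lo hi x : R) := Rmax lo (Rmin hi x).

Lemma clamp_range lo hi x : lo <= hi -> lo <= clamp lo hi x <= hi.
Proof. intros. unfold clamp, Rmax, Rmin. repeat destruct Rle_dec; lra. Qed.

Lemma clamp_id lo hi x : lo <= x <= hi -> clamp lo hi x = x.
Proof. intros. unfold clamp, Rmax, Rmin. repeat destruct Rle_dec; lra. Qed.

Lemma clamp_lipschitz lo hi x z : lo <= hi -> Rabs (clamp lo hi x - clamp lo hi z) <= Rabs (x - z).
Proof.
  intros. pose proof (Rle_abs (x - z)). pose proof (Rabs_maj2 (x - z)).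
  unfold clamp, Rmax, Rmin. apply Rabs_le. repeat destruct Rle_dec; lra.
Qed.

Lemma RInt_antiperiodic_twice (g h : R -> R) d l :
  (forall x, continuous g x) -> (forall x, continuous h x) -> (forall x, h (x + d) = - h x) ->
  @eq R (2 * RInt (fun x => g x * h x) 0 l)
    (RInt (fun y => (g y - g (y + d)) * h y) 0 (l - d)
     + RInt (fun x => g x * h x) (l - d) l - RInt (fun y => g (y + d) * h y) (- d) 0).
Proof.
  intros Cg Ch Hh.
  set (phi := fun x => g x * h x). set (psi := fun y => g (y + d) * h y).
  assert (Cphi : forall x, continuous phi x) by (intro x; apply (continuous_mult g); auto).
  assert (Cpsi : forall x, continuous psi x).
  { intro x. apply (continuous_mult (fun y => g (y + d))); [|auto].
    apply (continuous_comp (fun y => y + d) g); [|auto].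
    apply ex_derive_continuous_R. auto_derive. auto. }
  assert (Hsub : @eq R (RInt phi 0 l) (- RInt psi (- d) (l - d))).
  { pose proof (RInt_comp_lin (V:=R_CompleteNormedModule) phi 1 d (- d) (l - d)) as Hc.
    replace (1 * - d + d) with 0 in Hc by ring. replace (1 * (l - d) + d) with l in Hc by ring.
    rewrite <- Hc by (apply ex_RInt_continuous_R; auto).
    replace (- RInt psi (- d) (l - d)) with ((-1) * RInt psi (- d) (l - d)) by ring.
    rewrite <- (RInt_scal_R psi) by (apply ex_RInt_continuous_R; auto). apply RInt_ext_R.
    intros x _. unfold phi, psi. change (scal 1 ?z) with (1 * z).
    replace (1 * x + d) with (x + d) by ring. rewrite Hh. ring. }
  assert (Hdiff : @eq R (RInt phi 0 (l - d) - RInt psi 0 (l - d))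
                        (RInt (fun y => (g y - g (y + d)) * h y) 0 (l - d))).
  { rewrite (RInt_ext_R (fun y => (g y - g (y + d)) * h y) (fun y => phi y + (-1) * psi y))
      by (intros; unfold phi, psi; ring).
    rewrite RInt_plus_R, RInt_scal_R; [ring|..]; apply ex_RInt_continuous_R; auto.
    intro x. apply (continuous_scal_r (-1) psi). auto. }
  pose proof (RInt_Chasles_R phi 0 (l - d) l Cphi).
  pose proof (RInt_Chasles_R psi (- d) 0 (l - d) Cpsi).
  lra.
Qed.

Lemma abs_RInt_mul_cos_le (u : R -> R) U M a b : a <= b -> (forall x, continuous u x) ->
  (forall x, a <= x <= b -> Rabs (u x) <= U) ->
  Rabs (RInt (fun x => u x * cos (M * x)) a b) <= (b - a) * U.
Proof.
  intros Hab Cu Hu. apply abs_RInt_le_const; [exact Hab | |].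
  - apply ex_RInt_continuous_R. intro x. apply (continuous_mult u); [apply Cu|].
    apply ex_derive_continuous_R. auto_derive. auto.
  - intros t Ht. rewrite Rabs_mult.
    assert (Rabs (cos (M * t)) <= 1) by apply Rabs_le, COS_bound.
    pose proof (Hu t Ht). pose proof (Rabs_pos (u t)). pose proof (Rabs_pos (cos (M * t))). nra.
Qed.

(* Shift by half a period [PI / M] of [cos (M x)]: the main term is small because [g] is
   Lipschitz, the two boundary pieces because their length is [PI / M]. *)
Lemma RInt_lipschitz_cos_le (g : R -> R) L B M l : 0 <= L -> 0 < l -> PI <= M * l ->
  (forall x z, Rabs (g x - g z) <= L * Rabs (x - z)) -> (forall x, Rabs (g x) <= B) ->
  Rabs (RInt (fun x => g x * cos (M * x)) 0 l) <= (l * L + 2 * B) * PI / (2 * M).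
Proof.
  intros HL Hl HM Hlip HB. pose proof PI_bounds.
  assert (HM0 : 0 < M) by (destruct (Rle_or_lt M 0); [nra | lra]).
  set (d := PI / M).
  assert (Hd : 0 < d <= l).
  { unfold d. split; [apply Rdiv_lt_0_compat; lra|].
    apply Rmult_le_reg_r with M; [lra|].
    unfold Rdiv. rewrite Rmult_assoc, Rinv_l, Rmult_1_r by lra. lra. }
  assert (Ccos : forall x, continuous (fun x => cos (M * x)) x)
    by (intro x; apply ex_derive_continuous_R; auto_derive; auto).
  assert (Hgc : forall x, continuous g x) by (intro; apply (lipschitz_continuous g L); auto).
  assert (Hgd : forall x, continuous (fun y => g (y + d)) x).
  { intro x. apply (continuous_comp (fun y => y + d) g); [|auto].
    apply ex_derive_continuous_R. auto_derive. auto. }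
  assert (Hanti : forall x, cos (M * (x + d)) = - cos (M * x)).
  { intro x. replace (M * (x + d)) with (M * x + PI) by (unfold d; field; lra). apply neg_cos. }
  pose proof (RInt_antiperiodic_twice g (fun x => cos (M * x)) d l Hgc Ccos Hanti) as H2I.
  assert (B1 : Rabs (RInt (fun y => (g y - g (y + d)) * cos (M * y)) 0 (l - d))
               <= (l - d - 0) * (L * d)).
  { apply abs_RInt_mul_cos_le; [lra | |].
    - intro x. apply (continuous_minus g (fun y => g (y + d))); auto.
    - intros t _. eapply Rle_trans; [apply Hlip|]. replace (t - (t + d)) with (- d) by ring.
      rewrite Rabs_Ropp, Rabs_right by lra. lra. }
  assert (B2 : Rabs (RInt (fun x => g x * cos (M * x)) (l - d) l) <= (l - (l - d)) * B)
    by (apply abs_RInt_mul_cos_le; auto; lra).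
  assert (B3 : Rabs (RInt (fun y => g (y + d) * cos (M * y)) (- d) 0) <= (0 - - d) * B)
    by (apply abs_RInt_mul_cos_le; auto; lra).
  assert (Habs : Rabs (2 * RInt (fun x => g x * cos (M * x)) 0 l) <= l * (L * d) + d * B + d * B).
  { rewrite H2I. eapply Rle_trans; [apply Rabs_triang3|].
    assert ((l - d - 0) * (L * d) <= l * (L * d)) by (apply Rmult_le_compat_r; nra). lra. }
  rewrite Rabs_mult, Rabs_right in Habs by lra.
  replace ((l * L + 2 * B) * PI / (2 * M)) with ((l * (L * d) + d * B + d * B) / 2)
    by (unfold d; field; lra).
  lra.
Qed.

(** * Powers of PI + i t *)

(* [(re_pow k t, im_pow k t)] are the real and imaginary parts of [(PI + i t) ^ k]. *)
Fixpoint pi_it_pow (k : nat) (t : R) : R * R :=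
  match k with
  | O => (1, 0)
  | S k => (PI * fst (pi_it_pow k t) - t * snd (pi_it_pow k t),
            t * fst (pi_it_pow k t) + PI * snd (pi_it_pow k t))
  end.
Definition re_pow k t := fst (pi_it_pow k t).
Definition im_pow k t := snd (pi_it_pow k t).

Lemma re_pow_S k t : re_pow (S k) t = PI * re_pow k t - t * im_pow k t.
Proof. reflexivity. Qed.

Lemma im_pow_S k t : im_pow (S k) t = t * re_pow k t + PI * im_pow k t.
Proof. reflexivity. Qed.

Lemma re_im_pow_at_0 k : re_pow k 0 = PI ^ k /\ im_pow k 0 = 0.
Proof.
  induction k as [|k [H1 H2]]; [unfold re_pow, im_pow; simpl; auto|].
  rewrite re_pow_S, im_pow_S, H1, H2. simpl. split; ring.
Qed.

Lemma is_derive_re_im_pow k t :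
  is_derive (re_pow k) t (- INR k * im_pow (pred k) t) /\
  is_derive (im_pow k) t (INR k * re_pow (pred k) t).
Proof.
  revert t. induction k as [|k IH]; intro t.
  - unfold re_pow, im_pow; simpl. split; auto_derive; auto; ring.
  - assert (Ec : forall t, ex_derive (re_pow k) t) by (intro u; eexists; apply (proj1 (IH u))).
    assert (Es : forall t, ex_derive (im_pow k) t) by (intro u; eexists; apply (proj2 (IH u))).
    assert (Dc : forall t, Derive (re_pow k) t = - INR k * im_pow (pred k) t)
      by (intro u; apply is_derive_unique, IH).
    assert (Ds : forall t, Derive (im_pow k) t = INR k * re_pow (pred k) t)
      by (intro u; apply is_derive_unique, IH).
    split.
    + change (re_pow (S k)) with (fun t => PI * re_pow k t - t * im_pow k t).
      auto_derive; [split; [apply Ec|split; [apply Es|exact I]]|].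
      rewrite Dc, Ds. destruct k as [|k]; [unfold re_pow, im_pow; simpl; ring|].
      simpl pred. rewrite im_pow_S, !S_INR. ring.
    + change (im_pow (S k)) with (fun t => t * re_pow k t + PI * im_pow k t).
      auto_derive; [split; [apply Ec|split; [apply Es|exact I]]|].
      rewrite Dc, Ds. destruct k as [|k]; [unfold re_pow, im_pow; simpl; ring|].
      simpl pred. rewrite re_pow_S, !S_INR. ring.
Qed.

Lemma ex_derive_re_pow k t : ex_derive (re_pow k) t.
Proof. eexists. apply (proj1 (is_derive_re_im_pow k t)). Qed.

Lemma ex_derive_im_pow k t : ex_derive (im_pow k) t.
Proof. eexists. apply (proj2 (is_derive_re_im_pow k t)). Qed.

Lemma Derive_re_pow k t : Derive (re_pow k) t = - INR k * im_pow (pred k) t.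
Proof. apply is_derive_unique, is_derive_re_im_pow. Qed.

Lemma Derive_im_pow k t : Derive (im_pow k) t = INR k * re_pow (pred k) t.
Proof. apply is_derive_unique, is_derive_re_im_pow. Qed.

Lemma re_im_pow_bound k t : 0 <= t ->
  Rabs (re_pow k t) <= (PI + t) ^ k /\ Rabs (im_pow k t) <= (PI + t) ^ k.
Proof.
  intro Ht. pose proof PI_bounds.
  induction k as [|k [H1 H2]].
  - unfold re_pow, im_pow; simpl. rewrite Rabs_R1, Rabs_R0. split; lra.
  - rewrite re_pow_S, im_pow_S. simpl.
    assert (Hp : 0 <= (PI + t) ^ k) by (apply pow_le; lra).
    assert (t * Rabs (im_pow k t) <= t * (PI + t) ^ k) by (apply Rmult_le_compat_l; lra).
    assert (PI * Rabs (re_pow k t) <= PI * (PI + t) ^ k) by (apply Rmult_le_compat_l; lra).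
    assert (t * Rabs (re_pow k t) <= t * (PI + t) ^ k) by (apply Rmult_le_compat_l; lra).
    assert (PI * Rabs (im_pow k t) <= PI * (PI + t) ^ k) by (apply Rmult_le_compat_l; lra).
    split; (eapply Rle_trans; [apply Rabs_triang|]);
      rewrite ?Rabs_Ropp, !Rabs_mult, (Rabs_right PI), (Rabs_right t) by lra; lra.
Qed.

Lemma im_pow_bound k t : 0 <= t -> Rabs (im_pow k t) <= INR k * t * (PI + t) ^ k.
Proof.
  intro Ht. pose proof PI_bounds.
  induction k as [|k IH]; [unfold im_pow; simpl; rewrite Rabs_R0; lra|].
  rewrite im_pow_S, S_INR. simpl.
  destruct (re_im_pow_bound k t Ht) as [H1 _].
  assert (Hp : 0 <= (PI + t) ^ k) by (apply pow_le; lra).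
  assert (HI : 0 <= INR k) by apply pos_INR.
  assert (t * Rabs (re_pow k t) <= t * (PI + t) ^ k) by (apply Rmult_le_compat_l; lra).
  assert (PI * Rabs (im_pow k t) <= PI * (INR k * t * (PI + t) ^ k))
    by (apply Rmult_le_compat_l; lra).
  eapply Rle_trans; [apply Rabs_triang|].
  rewrite !Rabs_mult, (Rabs_right PI), (Rabs_right t) by lra.
  assert (0 <= t * (PI + t) ^ k) by (apply Rmult_le_pos; lra).
  assert (t * (PI + t) ^ k * (1 + PI * INR k) <= t * (PI + t) ^ k * ((INR k + 1) * (PI + t)))
    by (apply Rmult_le_compat_l; nra).
  nra.
Qed.

Lemma re_im_pow_polar k t : 0 <= t ->
  re_pow k t = sqrt (PI ^ 2 + t ^ 2) ^ k * cos (INR k * atan (t / PI)) /\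
  im_pow k t = sqrt (PI ^ 2 + t ^ 2) ^ k * sin (INR k * atan (t / PI)).
Proof.
  intro Ht. pose proof PI_bounds.
  set (r := sqrt (PI ^ 2 + t ^ 2)). set (th := atan (t / PI)).
  assert (Hr : 0 < r) by (apply sqrt_lt_R0; nra).
  assert (Hr2 : r * r = PI ^ 2 + t ^ 2) by (apply sqrt_sqrt; nra).
  assert (Hs : sqrt (1 + (t / PI)²) = r / PI).
  { apply sqrt_lem_1.
    - unfold Rsqr. apply Rplus_le_le_0_compat; [lra|apply Rle_0_sqr].
    - apply Rlt_le, Rdiv_lt_0_compat; lra.
    - unfold Rsqr. replace (r / PI * (r / PI)) with (r * r / (PI * PI)) by (field; lra).
      rewrite Hr2. field. lra. }
  assert (Hc : cos th = PI / r) by (unfold th; rewrite cos_atan, Hs; field; lra).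
  assert (Hsn : sin th = t / r) by (unfold th; rewrite sin_atan, Hs; field; lra).
  induction k as [|k [IH1 IH2]].
  - unfold re_pow, im_pow; simpl. rewrite Rmult_0_l, cos_0, sin_0. split; ring.
  - rewrite re_pow_S, im_pow_S, IH1, IH2, S_INR.
    replace ((INR k + 1) * th) with (INR k * th + th) by ring.
    rewrite cos_plus, sin_plus, Hc, Hsn. simpl. split; field; lra.
Qed.

Definition integrand (j : nat) (t : R) : R :=
  (PI ^ 2 + t ^ 2) ^ j / (exp t - 1) * sin (2 * INR j * atan (t / PI)).

Lemma integrand_im_pow j t : 0 <= t -> integrand j t = im_pow (2 * j) t / (exp t - 1).
Proof.
  intro Ht. unfold integrand. rewrite (proj2 (re_im_pow_polar (2 * j) t Ht)), pow_mult, mult_INR.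
  replace (sqrt (PI ^ 2 + t ^ 2) ^ 2) with (PI ^ 2 + t ^ 2).
  - replace (INR 2) with 2 by (simpl; ring). unfold Rdiv. ring.
  - simpl. rewrite !Rmult_1_r, sqrt_sqrt; [ring|]. pose proof PI_bounds. nra.
Qed.

(** * Laplace transforms against cosine coefficients *)

Definition cos_coef (m n : nat) : R := RInt (fun x => x ^ m * cos (INR n * x)) 0 PI.
Definition laplace_im (m n : nat) (b : R) : R :=
  RInt (fun t => im_pow m t * exp (- (INR n * t))) 0 b.

Lemma cos_sin_INR_mult_PI n : cos (INR n * PI) = (-1) ^ n /\ sin (INR n * PI) = 0.
Proof.
  induction n as [|n [H1 H2]]; [simpl; rewrite Rmult_0_l, cos_0, sin_0; auto|].
  rewrite S_INR. replace ((INR n + 1) * PI) with (INR n * PI + PI) by ring.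
  rewrite neg_cos, neg_sin, H1, H2. simpl. split; ring.
Qed.

Lemma cos_coef_0 n : (0 < n)%nat -> cos_coef 0 n = 0.
Proof.
  intro Hn. assert (HI : 0 < INR n) by (apply lt_0_INR; lia).
  unfold cos_coef. rewrite (RInt_primitive _ (fun x => sin (INR n * x) / INR n)).
  - rewrite Rmult_0_r, sin_0, (proj2 (cos_sin_INR_mult_PI n)). unfold Rdiv. ring.
  - intro x. auto_derive; auto. field. lra.
  - intro x. apply ex_derive_continuous_R. auto_derive. auto.
Qed.

(* Integration by parts twice. *)
Lemma cos_coef_SS m n : (0 < n)%nat ->
  cos_coef (S (S m)) n = INR (S (S m)) * PI ^ (S m) * (-1) ^ n / INR n ^ 2
                         - INR (S (S m)) * INR (S m) / INR n ^ 2 * cos_coef m n.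
Proof.
  intro Hn. assert (HI : 0 < INR n) by (apply lt_0_INR; lia).
  set (c := INR (S (S m)) * INR (S m) / INR n ^ 2).
  enough (E : cos_coef (S (S m)) n + c * cos_coef m n
              = INR (S (S m)) * PI ^ (S m) * (-1) ^ n / INR n ^ 2)
    by lra.
  unfold cos_coef. rewrite (RInt_primitive_plus_scal _ _
    (fun x => x ^ (S (S m)) * sin (INR n * x) / INR n
              + INR (S (S m)) * x ^ (S m) * cos (INR n * x) / INR n ^ 2)).
  - destruct (cos_sin_INR_mult_PI n) as [C S]. rewrite C, S, Rmult_0_r, !pow_i by lia.
    field. lra.
  - intro x. auto_derive; auto. unfold c.
    change (match m with 0%nat => 1 | S _ => INR m + 1 end) with (INR (S m)).
    rewrite !S_INR. simpl. field. lra.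
  - intro x. apply ex_derive_continuous_R. auto_derive. auto.
  - intro x. apply ex_derive_continuous_R. auto_derive. auto.
Qed.

Lemma laplace_im_0 n b : laplace_im 0 n b = 0.
Proof.
  unfold laplace_im. rewrite (RInt_ext_R _ (fun _ => 0)); [apply RInt_0_R|].
  intros. unfold im_pow; simpl. ring.
Qed.

Lemma laplace_im_SS m n b : (0 < n)%nat ->
  laplace_im (S (S m)) n b =
    - exp (- (INR n * b))
      * (im_pow (S (S m)) b / INR n + INR (S (S m)) * re_pow (S m) b / INR n ^ 2)
    + INR (S (S m)) * PI ^ (S m) / INR n ^ 2
    - INR (S (S m)) * INR (S m) / INR n ^ 2 * laplace_im m n b.
Proof.
  intro Hn. assert (HI : 0 < INR n) by (apply lt_0_INR; lia).
  set (c := INR (S (S m)) * INR (S m) / INR n ^ 2).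
  set (F := fun t => - exp (- (INR n * t))
                     * (im_pow (S (S m)) t / INR n + INR (S (S m)) * re_pow (S m) t / INR n ^ 2)).
  enough (E : laplace_im (S (S m)) n b + c * laplace_im m n b = F b - F 0)
    by (unfold F in E; rewrite Rmult_0_r, Ropp_0, exp_0, (proj1 (re_im_pow_at_0 (S m))),
          (proj2 (re_im_pow_at_0 (S (S m)))) in E;
        unfold Rdiv in *; rewrite Rmult_0_l in E; lra).
  unfold laplace_im. apply RInt_primitive_plus_scal.
  - intro x. unfold F.
    auto_derive; [split; [apply ex_derive_im_pow|split; [apply ex_derive_re_pow|exact I]]|].
    rewrite Derive_re_pow, Derive_im_pow. simpl pred. unfold c.
    change (match m with 0%nat => 1 | S _ => INR m + 1 end) with (INR (S m)).
    rewrite !S_INR. simpl. field. lra.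
  - intro x. apply ex_derive_continuous_R. auto_derive. apply ex_derive_im_pow.
  - intro x. apply ex_derive_continuous_R. auto_derive. apply ex_derive_im_pow.
Qed.

Lemma laplace_boundary_bound m n b : (0 < n)%nat -> 0 <= b ->
  Rabs (exp (- (INR n * b))
        * (im_pow (S (S m)) b / INR n + INR (S (S m)) * re_pow (S m) b / INR n ^ 2))
  <= (1 + INR (S (S m))) * exp (- b) * (PI + b) ^ (S (S m)).
Proof.
  intros Hn Hb. pose proof PI_bounds.
  assert (HN : 1 <= INR n) by (apply (le_INR 1); lia).
  assert (HN1 : / INR n <= 1) by (rewrite <- Rinv_1; apply Rinv_le_contravar; lra).
  assert (HN2 : / INR n ^ 2 <= 1) by (rewrite <- Rinv_1; apply Rinv_le_contravar; nra).
  assert (0 < / INR n) by (apply Rinv_0_lt_compat; lra).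
  assert (0 < / INR n ^ 2) by (apply Rinv_0_lt_compat; nra).
  assert (Hk : 0 <= INR (S (S m))) by apply pos_INR.
  set (X := PI + b). assert (HX : 1 <= X) by (unfold X; lra).
  assert (HXm : X ^ S m <= X ^ S (S m)) by (apply Rle_pow; [lra | lia]).
  destruct (re_im_pow_bound (S m) b Hb) as [Hc _].
  destruct (re_im_pow_bound (S (S m)) b Hb) as [_ Hs]. fold X in Hc, Hs.
  assert (HE : exp (- (INR n * b)) <= exp (- b)) by (apply exp_le_compat; nra).
  assert (B : Rabs (im_pow (S (S m)) b / INR n + INR (S (S m)) * re_pow (S m) b / INR n ^ 2)
              <= (1 + INR (S (S m))) * X ^ S (S m)).
  { unfold Rdiv. eapply Rle_trans; [apply Rabs_triang|].
    rewrite !Rabs_mult, (Rabs_right (INR _)), (Rabs_right (/ INR n)), (Rabs_right (/ INR n ^ 2))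
      by lra.
    assert (Rabs (im_pow (S (S m)) b) * / INR n <= X ^ S (S m)).
    { apply Rle_trans with (Rabs (im_pow (S (S m)) b) * 1); [|lra].
      apply Rmult_le_compat_l; [apply Rabs_pos | lra]. }
    assert (Rabs (re_pow (S m) b) * / INR n ^ 2 <= X ^ S (S m)).
    { apply Rle_trans with (Rabs (re_pow (S m) b) * 1); [|lra].
      apply Rmult_le_compat_l; [apply Rabs_pos | lra]. }
    nra. }
  rewrite Rabs_mult, (Rabs_right (exp _)) by (apply Rle_ge, Rlt_le, exp_pos).
  rewrite (Rmult_comm _ (exp (- b))), Rmult_assoc.
  apply Rmult_le_compat; [apply Rlt_le, exp_pos | apply Rabs_pos | exact HE | exact B].
Qed.

Fixpoint laplace_err_const (j : nat) : R :=
  match j with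
  | O => 0
  | S j => 2 * INR j + 3 + (2 * INR j + 2) * (2 * INR j + 1) * laplace_err_const j
  end.

Lemma laplace_err_const_ge0 j : 0 <= laplace_err_const j.
Proof. induction j; simpl; [lra|]. pose proof (pos_INR j). nra. Qed.

Lemma laplace_im_sub_cos_coef_SS m n b : (0 < n)%nat ->
  laplace_im (S (S m)) n b - (-1) ^ n * cos_coef (S (S m)) n =
  - (exp (- (INR n * b))
     * (im_pow (S (S m)) b / INR n + INR (S (S m)) * re_pow (S m) b / INR n ^ 2))
  - INR (S (S m)) * INR (S m) / INR n ^ 2 * (laplace_im m n b - (-1) ^ n * cos_coef m n).
Proof.
  intro Hn. assert (HI : 0 < INR n) by (apply lt_0_INR; lia).
  rewrite laplace_im_SS, cos_coef_SS by exact Hn.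
  assert (Hsg : (-1) ^ n * (-1) ^ n = 1)
    by (rewrite <- Rpow_mult_distr; replace (-1 * -1) with 1 by ring; apply pow1).
  rewrite <- (Rmult_1_r (INR (S (S m)) * PI ^ S m / INR n ^ 2)) at 1.
  rewrite <- Hsg. field. lra.
Qed.

Lemma laplace_im_cos_coef j n b : (0 < n)%nat -> 0 <= b ->
  Rabs (laplace_im (2 * j) n b - (-1) ^ n * cos_coef (2 * j) n)
  <= laplace_err_const j * exp (- b) * (PI + b) ^ (2 * j).
Proof.
  intros Hn Hb. pose proof PI_bounds.
  assert (HN : 1 <= INR n) by (apply (le_INR 1); lia).
  induction j as [|j IH].
  - rewrite laplace_im_0, cos_coef_0 by exact Hn. simpl.
    rewrite Rmult_0_r, Rminus_0_r, Rabs_R0. lra.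
  - replace (2 * S j)%nat with (S (S (2 * j))) by lia.
    rewrite laplace_im_sub_cos_coef_SS by exact Hn.
    set (D := laplace_im (2 * j) n b - (-1) ^ n * cos_coef (2 * j) n) in *.
    set (c := INR (S (S (2 * j))) * INR (S (2 * j)) / INR n ^ 2).
    assert (Hk2 : INR (S (S (2 * j))) = 2 * INR j + 2) by (rewrite !S_INR, mult_INR; simpl; ring).
    assert (Hk1 : INR (S (2 * j)) = 2 * INR j + 1) by (rewrite S_INR, mult_INR; simpl; ring).
    assert (Hc : 0 <= c <= (2 * INR j + 2) * (2 * INR j + 1)).
    { rewrite <- Hk2, <- Hk1.
      assert (0 <= INR (S (S (2 * j))) * INR (S (2 * j))) by (apply Rmult_le_pos; apply pos_INR).
      assert (0 < / INR n ^ 2 <= 1)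
        by (split; [apply Rinv_0_lt_compat; nra | rewrite <- Rinv_1; apply Rinv_le_contravar; nra]).
      unfold c, Rdiv. nra. }
    assert (HD : Rabs D <= laplace_err_const j * exp (- b) * (PI + b) ^ S (S (2 * j))).
    { eapply Rle_trans; [exact IH|]. apply Rmult_le_compat_l; [|apply Rle_pow; [lra | lia]].
      pose proof (laplace_err_const_ge0 j). pose proof (exp_pos (- b)). nra. }
    pose proof (laplace_boundary_bound (2 * j) n b Hn Hb) as HT.
    unfold Rminus. eapply Rle_trans; [apply Rabs_triang|].
    rewrite !Rabs_Ropp, (Rabs_mult c), (Rabs_right c) by lra.
    assert (c * Rabs D <= (2 * INR j + 2) * (2 * INR j + 1) * Rabs D)
      by (apply Rmult_le_compat_r; [apply Rabs_pos | lra]).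
    assert ((2 * INR j + 2) * (2 * INR j + 1) * Rabs D
            <= (2 * INR j + 2) * (2 * INR j + 1)
               * (laplace_err_const j * exp (- b) * (PI + b) ^ S (S (2 * j))))
      by (apply Rmult_le_compat_l; [pose proof (pos_INR j); nra | exact HD]).
    simpl laplace_err_const. rewrite Hk2 in HT |- *. lra.
Qed.

Lemma continuous_im_pow_exp m n t : continuous (fun t => im_pow m t * exp (- (INR n * t))) t.
Proof. apply ex_derive_continuous_R. auto_derive. apply ex_derive_im_pow. Qed.

Lemma laplace_im_small m n a : 0 <= a <= 1 -> Rabs (laplace_im m n a) <= a * (PI + 1) ^ m.
Proof.
  intros Ha. pose proof PI_bounds. unfold laplace_im.
  rewrite <- (Rminus_0_r a) at 2.
  apply abs_RInt_le_const; [lra | apply ex_RInt_continuous_R, continuous_im_pow_exp|].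
  intros t Ht. rewrite Rabs_mult, (Rabs_right (exp _)) by (apply Rle_ge, Rlt_le, exp_pos).
  destruct (re_im_pow_bound m t ltac:(lra)) as [_ Hs].
  assert (exp (- (INR n * t)) <= 1)
    by (rewrite <- exp_0; apply exp_le_compat; pose proof (pos_INR n); nra).
  assert ((PI + t) ^ m <= (PI + 1) ^ m) by (apply pow_incr; lra).
  pose proof (exp_pos (- (INR n * t))). pose proof (Rabs_pos (im_pow m t)). nra.
Qed.

(** * Alternating sums of cosine coefficients *)

Fixpoint alt_cos_sum (N : nat) (x : R) : R :=
  match N with
  | O => 0
  | S N => alt_cos_sum N x + (-1) ^ (S N) * cos (INR (S N) * x)
  end.

Lemma continuous_alt_cos_sum N x : continuous (alt_cos_sum N) x.
Proof.
  revert x. induction N as [|N IH]; intro x.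
  - apply continuous_const.
  - apply (continuous_plus (alt_cos_sum N) (fun x => (-1) ^ (S N) * cos (INR (S N) * x)));
      [apply IH|].
    apply ex_derive_continuous_R. auto_derive. auto.
Qed.

Lemma alt_cos_sum_closed N x :
  2 * cos (x / 2) * (alt_cos_sum N x + 1 / 2) = (-1) ^ N * cos ((INR N + 1 / 2) * x).
Proof.
  induction N as [|N IH].
  - simpl. replace ((0 + 1 / 2) * x) with (x / 2) by field. field.
  - change (alt_cos_sum (S N) x) with (alt_cos_sum N x + (-1) ^ (S N) * cos (INR (S N) * x)).
    replace (2 * cos (x / 2) * (alt_cos_sum N x + (-1) ^ S N * cos (INR (S N) * x) + 1 / 2))
      with (2 * cos (x / 2) * (alt_cos_sum N x + 1 / 2)
            + (-1) ^ S N * (2 * cos (x / 2) * cos (INR (S N) * x))) by ring.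
    assert (Hprod : forall a b, 2 * cos a * cos b = cos (b + a) + cos (b - a))
      by (intros; rewrite cos_plus, cos_minus; ring).
    rewrite IH, Hprod, S_INR.
    replace ((INR N + 1) * x + x / 2) with ((INR N + 1 + 1 / 2) * x) by field.
    replace ((INR N + 1) * x - x / 2) with ((INR N + 1 / 2) * x) by field.
    simpl. ring.
Qed.

Lemma RInt_alt_cos_sum N : @eq R (RInt (alt_cos_sum N) 0 PI) 0.
Proof.
  induction N as [|N IH]; [apply RInt_0_R|].
  change (alt_cos_sum (S N)) with (fun x => alt_cos_sum N x + (-1) ^ (S N) * cos (INR (S N) * x)).
  assert (Ccos : forall x, continuous (fun x => cos (INR (S N) * x)) x)
    by (intro x; apply ex_derive_continuous_R; auto_derive; auto).
  rewrite RInt_plus_R, RInt_scal_R, IH.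
  - rewrite (RInt_ext_R _ (fun x => x ^ 0 * cos (INR (S N) * x))) by (intros; simpl; ring).
    fold (cos_coef 0 (S N)). rewrite cos_coef_0 by lia. ring.
  - apply ex_RInt_continuous_R, Ccos.
  - apply ex_RInt_continuous_R, continuous_alt_cos_sum.
  - apply ex_RInt_continuous_R. intro x. apply ex_derive_continuous_R. auto_derive. auto.
Qed.

Fixpoint alt_cos_coef_sum (m N : nat) : R :=
  match N with
  | O => 0
  | S N => alt_cos_coef_sum m N + (-1) ^ (S N) * cos_coef m (S N)
  end.

Lemma alt_cos_coef_sum_RInt m N :
  alt_cos_coef_sum m N = RInt (fun x => x ^ m * alt_cos_sum N x) 0 PI.
Proof.
  induction N as [|N IH].
  - simpl. rewrite (RInt_ext_R _ (fun _ => 0)) by (intros; ring). symmetry. apply RInt_0_R.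
  - simpl alt_cos_coef_sum. rewrite IH. unfold cos_coef. symmetry.
    rewrite (RInt_ext_R _ (fun x => x ^ m * alt_cos_sum N x
                                    + (-1) ^ S N * (x ^ m * cos (INR (S N) * x))))
      by (intros x _; cbn [alt_cos_sum]; ring).
    rewrite RInt_plus_R, RInt_scal_R; [reflexivity|..].
    + apply ex_RInt_continuous_R. intro x. apply ex_derive_continuous_R. auto_derive. auto.
    + apply ex_RInt_continuous_R. intro x.
      apply (continuous_mult (fun x => x ^ m) (alt_cos_sum N)); [|apply continuous_alt_cos_sum].
      apply ex_derive_continuous_R. auto_derive. auto.
    + apply ex_RInt_continuous_R. intro x. apply ex_derive_continuous_R. auto_derive. auto.
Qed.

Definition sin_ratio (y : R) := y / (2 * sin (y / 2)).

Definition sin_ratio_ext (y : R) := if Req_EM_T y 0 then 1 else sin_ratio y.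

Definition sin_ratio_deriv (x : R) :=
  (sin (x / 2) - (x / 2) * cos (x / 2)) / (2 * sin (x / 2) ^ 2).

Lemma is_derive_sin_ratio x : sin (x / 2) <> 0 -> is_derive sin_ratio x (sin_ratio_deriv x).
Proof.
  intro H. unfold sin_ratio, sin_ratio_deriv. change (x * / 2) with (x / 2).
  auto_derive; [change (x * / 2) with (x / 2); lra|]. change (x * / 2) with (x / 2). field. auto.
Qed.

Lemma sin_half_pos y : 0 < y <= PI -> 0 < sin (y / 2).
Proof. intros. apply sin_gt_0; pose proof PI_bounds; lra. Qed.

Lemma sin_ratio_deriv_bound x : 0 < x <= PI -> Rabs (sin_ratio_deriv x) <= 2.
Proof.
  intros Hx. pose proof PI_lt_16_5.
  destruct (sin_small_bounds (x / 2) ltac:(lra)) as [A [C _]].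
  set (u := x / 2) in *. set (s := sin u) in *.
  assert (Hu : 0 < u) by (unfold u; lra). assert (Hs : 0 < s) by lra.
  unfold sin_ratio_deriv. fold u s. unfold Rdiv. rewrite Rabs_mult, Rabs_inv.
  rewrite (Rabs_right (2 * s ^ 2)) by (apply Rle_ge; simpl; nra).
  apply Rle_trans with (u ^ 3 / 2 * / (2 * s ^ 2)).
  { apply Rmult_le_compat_r; [apply Rlt_le, Rinv_0_lt_compat; simpl; nra | exact C]. }
  apply Rle_trans with (u ^ 3 / 2 * / (2 * (u / 2) ^ 2)).
  { apply Rmult_le_compat_l; [simpl; nra|]. apply Rinv_le_contravar; simpl; nra. }
  replace (u ^ 3 / 2 * / (2 * (u / 2) ^ 2)) with u by (field; lra). unfold u; lra.
Qed.

Lemma sin_ratio_lipschitz y z : 0 < y <= PI -> 0 < z <= PI ->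
  Rabs (sin_ratio y - sin_ratio z) <= 2 * Rabs (y - z).
Proof.
  intros Hy Hz.
  assert (Hin : forall x, Rmin z y <= x <= Rmax z y -> 0 < x <= PI)
    by (intros x Hx; unfold Rmin, Rmax in Hx; destruct Rle_dec in Hx; lra).
  destruct (MVT_gen sin_ratio z y sin_ratio_deriv) as [c [Hc E]].
  - intros x Hx. apply is_derive_sin_ratio.
    assert (0 < x <= PI) by (apply Hin; lra). pose proof (sin_half_pos x H). lra.
  - intros x Hx. apply continuity_pt_filterlim, ex_derive_continuous_R. eexists.
    apply is_derive_sin_ratio. pose proof (sin_half_pos x (Hin x Hx)). lra.
  - rewrite E, Rabs_mult. apply Rmult_le_compat_r; [apply Rabs_pos|].
    apply sin_ratio_deriv_bound, Hin. exact Hc.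
Qed.

Lemma sin_ratio_near_0 y : 0 < y <= PI -> Rabs (sin_ratio y - 1) <= 2 * y.
Proof.
  intros Hy. pose proof PI_lt_16_5. pose proof PI_bounds.
  destruct (sin_small_bounds (y / 2) ltac:(lra)) as [A [_ D]].
  unfold sin_ratio. set (u := y / 2) in *. set (s := sin u) in *.
  assert (Hu : 0 < u) by (unfold u; lra). assert (Hs : 0 < s) by lra.
  replace (y / (2 * s) - 1) with ((u - s) / s) by (unfold u; field; lra).
  unfold Rdiv. rewrite Rabs_mult, Rabs_inv, (Rabs_right s) by lra.
  apply Rle_trans with (u ^ 3 / 6 * / s).
  { apply Rmult_le_compat_r; [apply Rlt_le, Rinv_0_lt_compat; lra | exact D]. }
  apply Rle_trans with (u ^ 3 / 6 * / (u / 2)).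
  { apply Rmult_le_compat_l; [simpl; nra | apply Rinv_le_contravar; lra]. }
  replace (u ^ 3 / 6 * / (u / 2)) with (u * u / 3) by (simpl; field; lra). unfold u. nra.
Qed.

Lemma sin_ratio_ext_lipschitz y z : 0 <= y <= PI -> 0 <= z <= PI ->
  Rabs (sin_ratio_ext y - sin_ratio_ext z) <= 2 * Rabs (y - z).
Proof.
  intros Hy Hz. unfold sin_ratio_ext.
  destruct (Req_EM_T y 0) as [Ey|Ey]; destruct (Req_EM_T z 0) as [Ez|Ez]; try subst.
  - replace (1 - 1) with 0 by ring. rewrite Rminus_0_r, Rabs_R0. lra.
  - rewrite Rabs_minus_sym. eapply Rle_trans; [apply sin_ratio_near_0; lra|].
    rewrite Rminus_0_l, Rabs_Ropp, Rabs_right by lra. lra.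
  - eapply Rle_trans; [apply sin_ratio_near_0; lra|]. rewrite Rminus_0_r, Rabs_right by lra. lra.
  - apply sin_ratio_lipschitz; lra.
Qed.

Lemma sin_ratio_ext_bound y : 0 <= y <= PI -> Rabs (sin_ratio_ext y) <= 2.
Proof.
  intros Hy. unfold sin_ratio_ext. destruct (Req_EM_T y 0); [rewrite Rabs_R1; lra|].
  pose proof PI_lt_16_5. pose proof PI_bounds.
  destruct (sin_small_bounds (y / 2) ltac:(lra)) as [A _].
  unfold sin_ratio. rewrite Rabs_right by (apply Rle_ge, Rlt_le, Rdiv_lt_0_compat; lra).
  apply Rmult_le_reg_r with (2 * sin (y / 2)); [lra|].
  unfold Rdiv. rewrite Rmult_assoc, Rinv_l, Rmult_1_r by lra. lra.
Qed.

Fixpoint pow_diff_quot (m : nat) (x : R) : R :=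
  match m with O => 0 | S m => x * pow_diff_quot m x + PI ^ m end.

Lemma pow_sub_pow_factor m x : x ^ m - PI ^ m = (x - PI) * pow_diff_quot m x.
Proof.
  induction m as [|m IH]; [simpl; ring|]. simpl pow_diff_quot. simpl pow.
  replace (x * x ^ m - PI * PI ^ m) with (x * (x ^ m - PI ^ m) + (x - PI) * PI ^ m) by ring.
  rewrite IH. ring.
Qed.

Fixpoint pow_diff_quot_lip (m : nat) : R :=
  match m with O => 0 | S m => PI * pow_diff_quot_lip m + INR m * PI ^ m end.

Lemma pow_diff_quot_bound m x : 0 <= x <= PI -> Rabs (pow_diff_quot m x) <= INR m * PI ^ m.
Proof.
  intros Hx. pose proof PI_bounds.
  induction m as [|m IH]; [simpl; rewrite Rabs_R0; lra|].
  simpl pow_diff_quot. rewrite S_INR. simpl pow.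
  assert (0 <= PI ^ m) by (apply pow_le; lra).
  eapply Rle_trans; [apply Rabs_triang|].
  rewrite Rabs_mult, (Rabs_right x), (Rabs_right (PI ^ m)) by lra.
  assert (x * Rabs (pow_diff_quot m x) <= PI * (INR m * PI ^ m))
    by (apply Rmult_le_compat; try lra; apply Rabs_pos).
  pose proof (pos_INR m). nra.
Qed.

Lemma pow_diff_quot_lip_ge0 m : 0 <= pow_diff_quot_lip m.
Proof.
  pose proof PI_bounds. induction m; simpl; [lra|].
  pose proof (pos_INR m). assert (0 <= PI ^ m) by (apply pow_le; lra). nra.
Qed.

Lemma pow_diff_quot_lipschitz m x z : 0 <= x <= PI -> 0 <= z <= PI ->
  Rabs (pow_diff_quot m x - pow_diff_quot m z) <= pow_diff_quot_lip m * Rabs (x - z).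
Proof.
  intros Hx Hz. pose proof PI_bounds.
  induction m as [|m IH]; [simpl; rewrite Rminus_0_r, Rabs_R0; lra|].
  simpl pow_diff_quot. simpl pow_diff_quot_lip.
  replace (x * pow_diff_quot m x + PI ^ m - (z * pow_diff_quot m z + PI ^ m))
    with (x * (pow_diff_quot m x - pow_diff_quot m z) + (x - z) * pow_diff_quot m z) by ring.
  eapply Rle_trans; [apply Rabs_triang|]. rewrite !Rabs_mult, (Rabs_right x) by lra.
  pose proof (pow_diff_quot_bound m z Hz). pose proof (Rabs_pos (x - z)).
  pose proof (Rabs_pos (pow_diff_quot m x - pow_diff_quot m z)).
  assert (x * Rabs (pow_diff_quot m x - pow_diff_quot m z)
    <= PI * (pow_diff_quot_lip m * Rabs (x - z)))
    by (apply Rmult_le_compat; lra).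
  assert (Rabs (x - z) * Rabs (pow_diff_quot m z) <= Rabs (x - z) * (INR m * PI ^ m))
    by (apply Rmult_le_compat_l; lra).
  nra.
Qed.

(* Clamping makes the amplitude Lipschitz on all of [R]; only its values on [0, PI] matter. *)
Definition osc_amplitude (m : nat) (x : R) :=
  - pow_diff_quot m (clamp 0 PI x) * sin_ratio_ext (PI - clamp 0 PI x).
Definition osc_amplitude_lip (m : nat) := 2 * (INR m * PI ^ m) + 2 * pow_diff_quot_lip m.
Definition osc_amplitude_max (m : nat) := 2 * (INR m * PI ^ m).

Lemma osc_amplitude_lipschitz m x z :
  Rabs (osc_amplitude m x - osc_amplitude m z) <= osc_amplitude_lip m * Rabs (x - z).
Proof.
  pose proof PI_bounds.
  unfold osc_amplitude, osc_amplitude_lip.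
  pose proof (clamp_range 0 PI x ltac:(lra)) as Hx.
  pose proof (clamp_range 0 PI z ltac:(lra)) as Hz.
  pose proof (clamp_lipschitz 0 PI x z ltac:(lra)) as Hxz.
  set (a := clamp 0 PI x) in *. set (b := clamp 0 PI z) in *.
  pose proof (pow_diff_quot_bound m a Hx). pose proof (sin_ratio_ext_bound (PI - b) ltac:(lra)).
  pose proof (sin_ratio_ext_lipschitz (PI - a) (PI - b) ltac:(lra) ltac:(lra)) as Hw.
  replace (PI - a - (PI - b)) with (- (a - b)) in Hw by ring. rewrite Rabs_Ropp in Hw.
  pose proof (pow_diff_quot_lipschitz m a b Hx Hz) as Hq.
  set (q := pow_diff_quot m) in *. set (w := sin_ratio_ext) in *.
  replace (- q a * w (PI - a) - - q b * w (PI - b))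
    with (- (q a * (w (PI - a) - w (PI - b)) + w (PI - b) * (q a - q b))) by ring.
  rewrite Rabs_Ropp. eapply Rle_trans; [apply Rabs_triang|]. rewrite !Rabs_mult.
  pose proof (Rabs_pos (q a)). pose proof (Rabs_pos (w (PI - b))). pose proof (Rabs_pos (x - z)).
  pose proof (Rabs_pos (w (PI - a) - w (PI - b))). pose proof (Rabs_pos (q a - q b)).
  pose proof (pow_diff_quot_lip_ge0 m).
  assert (Rabs (q a) * Rabs (w (PI - a) - w (PI - b)) <= (INR m * PI ^ m) * (2 * Rabs (x - z)))
    by (apply Rmult_le_compat; lra).
  assert (Rabs (w (PI - b)) * Rabs (q a - q b) <= 2 * (pow_diff_quot_lip m * Rabs (x - z))).
  { apply Rmult_le_compat; try lra. eapply Rle_trans; [apply Hq|]. apply Rmult_le_compat_l; lra. }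
  lra.
Qed.

Lemma osc_amplitude_bound m x : Rabs (osc_amplitude m x) <= osc_amplitude_max m.
Proof.
  pose proof PI_bounds. unfold osc_amplitude, osc_amplitude_max.
  pose proof (clamp_range 0 PI x ltac:(lra)) as Hx. rewrite Rabs_mult, Rabs_Ropp.
  pose proof (pow_diff_quot_bound m _ Hx).
  pose proof (sin_ratio_ext_bound (PI - clamp 0 PI x) ltac:(lra)).
  pose proof (Rabs_pos (pow_diff_quot m (clamp 0 PI x))).
  pose proof (Rabs_pos (sin_ratio_ext (PI - clamp 0 PI x))). nra.
Qed.

Lemma osc_amplitude_max_ge0 m : 0 <= osc_amplitude_max m.
Proof. eapply Rle_trans; [apply Rabs_pos | apply (osc_amplitude_bound m 0)]. Qed.

Lemma osc_amplitude_lip_ge0 m : 0 <= osc_amplitude_lip m.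
Proof.
  unfold osc_amplitude_lip. pose proof (pow_diff_quot_lip_ge0 m). pose proof (pos_INR m).
  pose proof PI_bounds. assert (0 <= PI ^ m) by (apply pow_le; lra). nra.
Qed.

Lemma pow_mul_alt_cos_sum_decomp m N x : 0 < x < PI ->
  x ^ m * alt_cos_sum N x =
  PI ^ m * alt_cos_sum N x + (PI ^ m - x ^ m) / 2
  + (-1) ^ N * (osc_amplitude m x * cos ((INR N + 1 / 2) * x)).
Proof.
  intros Hx. pose proof PI_bounds.
  assert (Hc : 0 < cos (x / 2)) by (apply cos_gt_0; lra).
  assert (HK : alt_cos_sum N x = (-1) ^ N * cos ((INR N + 1 / 2) * x) / (2 * cos (x / 2)) - 1 / 2)
    by (rewrite <- alt_cos_sum_closed; field; lra).
  unfold osc_amplitude. rewrite clamp_id by lra. unfold sin_ratio_ext.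
  destruct (Req_EM_T (PI - x) 0); [lra|].
  unfold sin_ratio. replace ((PI - x) / 2) with (PI / 2 - x / 2) by field. rewrite sin_shift.
  pose proof (pow_sub_pow_factor m x) as Q.
  replace (x ^ m) with (PI ^ m + (x - PI) * pow_diff_quot m x) by lra.
  rewrite HK. field. lra.
Qed.

Lemma RInt_pow_gap m :
  @eq R (RInt (fun x => (PI ^ m - x ^ m) / 2) 0 PI) (INR m * PI ^ (S m) / (2 * INR (S m))).
Proof.
  assert (HS : 0 < INR (S m)) by (apply lt_0_INR; lia).
  rewrite (RInt_primitive _ (fun x => (PI ^ m * x - x ^ (S m) / INR (S m)) / 2)).
  - rewrite pow_i by lia. rewrite S_INR in *. simpl. field. lra.
  - intro x. auto_derive; [exact I|].
    change (match m with 0%nat => 1 | S _ => INR m + 1 end) with (INR (S m)). field. lra.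
  - intro x. apply ex_derive_continuous_R. auto_derive. auto.
Qed.

Definition alt_cos_coef_const (m : nat) : R :=
  (PI * osc_amplitude_lip m + 2 * osc_amplitude_max m) * PI / 2.

Lemma alt_cos_coef_const_ge0 m : 0 <= alt_cos_coef_const m.
Proof.
  unfold alt_cos_coef_const. pose proof (osc_amplitude_lip_ge0 m).
  pose proof (osc_amplitude_max_ge0 m).
  pose proof PI_bounds. apply Rmult_le_pos; [apply Rmult_le_pos|]; nra.
Qed.

Lemma alt_cos_coef_sum_approx m N : (1 <= N)%nat ->
  Rabs (alt_cos_coef_sum m N - INR m * PI ^ (S m) / (2 * INR (S m)))
  <= alt_cos_coef_const m / (INR N + 1 / 2).
Proof.
  intros HN. pose proof PI_bounds.
  assert (HIN : 1 <= INR N) by (apply (le_INR 1); lia).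
  set (M := INR N + 1 / 2).
  assert (CK : forall x, continuous (fun x => PI ^ m * alt_cos_sum N x) x)
    by (intro x; apply (continuous_scal_r (PI ^ m) (alt_cos_sum N)), continuous_alt_cos_sum).
  assert (CP : forall x, continuous (fun x => (PI ^ m - x ^ m) / 2) x)
    by (intro x; apply ex_derive_continuous_R; auto_derive; auto).
  assert (CA : forall x, continuous (osc_amplitude m) x)
    by (intro; apply (lipschitz_continuous _ (osc_amplitude_lip m));
        [apply osc_amplitude_lip_ge0 | apply osc_amplitude_lipschitz]).
  assert (CO : forall x, continuous (fun x => osc_amplitude m x * cos (M * x)) x).
  { intro x. apply (continuous_mult (osc_amplitude m)); [apply CA|].
    apply ex_derive_continuous_R. auto_derive. auto. }
  rewrite alt_cos_coef_sum_RInt.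
  rewrite (RInt_ext_R _ (fun x => (PI ^ m * alt_cos_sum N x + (PI ^ m - x ^ m) / 2)
                                  + (-1) ^ N * (osc_amplitude m x * cos (M * x)))).
  2: { intros x Hx. rewrite Rmin_left, Rmax_right in Hx by lra.
       apply pow_mul_alt_cos_sum_decomp. lra. }
  rewrite RInt_plus_R, RInt_plus_R, RInt_scal_R, RInt_scal_R, RInt_alt_cos_sum, RInt_pow_gap.
  - match goal with |- Rabs ?L <= _ =>
      replace L with ((-1) ^ N * RInt (fun x => osc_amplitude m x * cos (M * x)) 0 PI) by ring end.
    rewrite Rabs_mult, pow_1_abs, Rmult_1_l.
    eapply Rle_trans.
    + apply (RInt_lipschitz_cos_le (osc_amplitude m) (osc_amplitude_lip m) (osc_amplitude_max m));
        [apply osc_amplitude_lip_ge0 | lra | unfold M; nra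
        | apply osc_amplitude_lipschitz | apply osc_amplitude_bound].
    + unfold alt_cos_coef_const. right. field. unfold M; lra.
  all: apply ex_RInt_continuous_R; intro x.
  - exact (CO x).
  - apply continuous_alt_cos_sum.
  - exact (CK x).
  - exact (CP x).
  - apply (continuous_plus (fun x => PI ^ m * alt_cos_sum N x)); auto.
  - apply (continuous_scal_r ((-1) ^ N) (fun x => osc_amplitude m x * cos (M * x))), CO.
Qed.

(** * Expanding 1 / (exp t - 1) *)

Fixpoint exp_geom_sum (N : nat) (t : R) : R :=
  match N with O => 0 | S N => exp_geom_sum N t + exp (- (INR (S N) * t)) end.

Lemma exp_geom_sum_closed N t : (exp t - 1) * exp_geom_sum N t = 1 - exp (- (INR N * t)).
Proof.
  induction N as [|N IH]; [simpl; rewrite Rmult_0_l, Ropp_0, exp_0; ring|].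
  change (exp_geom_sum (S N) t) with (exp_geom_sum N t + exp (- (INR (S N) * t))).
  rewrite Rmult_plus_distr_l, IH, S_INR.
  replace (- (INR N * t)) with (t + - ((INR N + 1) * t)) by ring. rewrite exp_plus. ring.
Qed.

Lemma inv_exp_sub_1_split N t : 0 < t ->
  / (exp t - 1) = exp_geom_sum N t + exp (- (INR N * t)) / (exp t - 1).
Proof.
  intro Ht. pose proof (exp_ineq1 t ltac:(lra)) as He. pose proof (exp_geom_sum_closed N t) as Hs.
  apply Rmult_eq_reg_l with (exp t - 1); [|lra].
  rewrite Rmult_plus_distr_l, Hs. field. lra.
Qed.

Lemma continuous_im_pow_exp_geom_sum m N t : continuous (fun t => im_pow m t * exp_geom_sum N t) t.
Proof.
  revert t. induction N as [|N IH]; intro t.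
  - apply (continuous_ext (fun _ => 0));
      [intro; symmetry; apply Rmult_0_r | apply continuous_const].
  - apply (continuous_ext
      (fun t => im_pow m t * exp_geom_sum N t + im_pow m t * exp (- (INR (S N) * t)))).
    + intro x. symmetry. apply Rmult_plus_distr_l.
    + apply (continuous_plus (fun t => im_pow m t * exp_geom_sum N t)); [apply IH|].
      apply continuous_im_pow_exp.
Qed.

Lemma continuous_im_pow_div m n t : 0 < t ->
  continuous (fun t => im_pow m t * exp (- (INR n * t)) / (exp t - 1)) t.
Proof.
  intro Ht. apply ex_derive_continuous_R. pose proof (exp_ineq1 t ltac:(lra)).
  auto_derive. split; [apply ex_derive_im_pow | split; [lra | exact I]].
Qed.

Lemma RInt_im_pow_exp_geom_sum_S m N a b :
  @eq R (RInt (fun t => im_pow m t * exp_geom_sum (S N) t) a b)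
    (RInt (fun t => im_pow m t * exp_geom_sum N t) a b
     + (laplace_im m (S N) b - laplace_im m (S N) a)).
Proof.
  rewrite (RInt_ext_R _
    (fun t => im_pow m t * exp_geom_sum N t + im_pow m t * exp (- (INR (S N) * t))))
    by (intros x _; cbn [exp_geom_sum]; ring).
  rewrite RInt_plus_R; [|apply ex_RInt_continuous_R, continuous_im_pow_exp_geom_sum
                        |apply ex_RInt_continuous_R, continuous_im_pow_exp].
  unfold laplace_im. rewrite <- (RInt_Chasles_R _ 0 a b) by apply continuous_im_pow_exp. ring.
Qed.

Lemma RInt_im_pow_exp_geom_sum_approx j N a b : 0 <= a <= 1 -> 0 <= b ->
  Rabs (RInt (fun t => im_pow (2 * j) t * exp_geom_sum N t) a b - alt_cos_coef_sum (2 * j) N)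
  <= INR N * (laplace_err_const j * exp (- b) * (PI + b) ^ (2 * j) + a * (PI + 1) ^ (2 * j)).
Proof.
  intros Ha Hb. induction N as [|N IH].
  - simpl. rewrite (RInt_ext_R _ (fun _ => 0)) by (intros; simpl; ring).
    rewrite RInt_0_R, Rminus_0_r, Rabs_R0. lra.
  - rewrite RInt_im_pow_exp_geom_sum_S. cbn [alt_cos_coef_sum].
    match goal with |- Rabs ?L <= _ => replace L with
      ((RInt (fun t => im_pow (2 * j) t * exp_geom_sum N t) a b - alt_cos_coef_sum (2 * j) N)
       + (laplace_im (2 * j) (S N) b - (-1) ^ S N * cos_coef (2 * j) (S N))
       - laplace_im (2 * j) (S N) a) by ring end.
    eapply Rle_trans; [apply Rabs_triang3|].
    pose proof (laplace_im_cos_coef j (S N) b ltac:(lia) Hb).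
    pose proof (laplace_im_small (2 * j) (S N) a Ha).
    rewrite S_INR. lra.
Qed.

Lemma im_pow_div_exp_bound m N t : 0 < t ->
  Rabs (im_pow m t * exp (- (INR N * t)) / (exp t - 1))
  <= INR m * INR (fact m) * exp PI * exp (- ((INR N - 1) * t)).
Proof.
  intros Ht. pose proof PI_bounds.
  pose proof (exp_ineq1 t ltac:(lra)) as He.
  pose proof (im_pow_bound m t ltac:(lra)) as Hs.
  pose proof (pow_le_fact_mul_exp (PI + t) m ltac:(lra)) as Hp. rewrite exp_plus in Hp.
  assert (E1 : exp (- (INR N * t)) * exp t = exp (- ((INR N - 1) * t)))
    by (rewrite <- exp_plus; f_equal; ring).
  assert (Hq : t * / (exp t - 1) <= 1).
  { apply Rmult_le_reg_r with (exp t - 1); [lra|]. rewrite Rmult_assoc, Rinv_l, Rmult_1_r; lra. }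
  assert (0 < / (exp t - 1)) by (apply Rinv_0_lt_compat; lra).
  pose proof (exp_pos (- (INR N * t))). pose proof (exp_pos t). pose proof (exp_pos PI).
  pose proof (pos_INR m). assert (0 <= (PI + t) ^ m) by (apply pow_le; lra).
  unfold Rdiv. rewrite !Rabs_mult, Rabs_inv, (Rabs_right (exp _)), (Rabs_right (exp t - 1))
    by (try apply Rle_ge, Rlt_le, exp_pos; lra).
  apply Rle_trans with (INR m * (PI + t) ^ m * exp (- (INR N * t)) * (t * / (exp t - 1))).
  { replace (INR m * (PI + t) ^ m * exp (- (INR N * t)) * (t * / (exp t - 1)))
      with (INR m * t * (PI + t) ^ m * exp (- (INR N * t)) * / (exp t - 1)) by ring.
    apply Rmult_le_compat_r; [lra|]. apply Rmult_le_compat_r; [lra | exact Hs]. }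
  apply Rle_trans with (INR m * (PI + t) ^ m * exp (- (INR N * t))).
  { rewrite <- (Rmult_1_r (INR m * (PI + t) ^ m * exp (- (INR N * t)))) at 2.
    apply Rmult_le_compat_l; [apply Rmult_le_pos; [apply Rmult_le_pos|]; lra | exact Hq]. }
  rewrite <- E1.
  replace (INR m * INR (fact m) * exp PI * (exp (- (INR N * t)) * exp t))
    with (INR m * (INR (fact m) * (exp PI * exp t)) * exp (- (INR N * t))) by ring.
  apply Rmult_le_compat_r; [lra|]. apply Rmult_le_compat_l; [lra | exact Hp].
Qed.

Lemma RInt_remainder_bound m N a b : (2 <= N)%nat -> 0 < a <= b ->
  Rabs (RInt (fun t => im_pow m t * exp (- (INR N * t)) / (exp t - 1)) a b)
  <= INR m * INR (fact m) * exp PI / (INR N - 1).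
Proof.
  intros HN Hab.
  assert (HN1 : 1 <= INR N - 1) by (assert (2 <= INR N) by (apply (le_INR 2); lia); lra).
  assert (Hcont : forall t, Rmin a b <= t <= Rmax a b ->
            continuous (fun t => im_pow m t * exp (- (INR N * t)) / (exp t - 1)) t).
  { intros t Ht. rewrite Rmin_left, Rmax_right in Ht by lra. apply continuous_im_pow_div. lra. }
  assert (HC : 0 <= INR m * INR (fact m) * exp PI).
  { pose proof (pos_INR m). pose proof (INR_fact_lt_0 m). pose proof (exp_pos PI).
    apply Rmult_le_pos; [apply Rmult_le_pos|]; lra. }
  eapply Rle_trans; [apply abs_RInt_le;
    [lra | apply (ex_RInt_continuous (V:=R_CompleteNormedModule)); exact Hcont]|].
  eapply Rle_trans;
    [apply (RInt_le _ (fun t => INR m * INR (fact m) * exp PI * exp (- ((INR N - 1) * t))))|].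
  - lra.
  - apply (ex_RInt_continuous (V:=R_CompleteNormedModule)). intros t Ht.
    apply (continuous_comp _ Rabs); [apply Hcont, Ht | apply continuous_Rabs].
  - apply ex_RInt_continuous_R. intro t. apply ex_derive_continuous_R. auto_derive. auto.
  - intros t Ht. apply im_pow_div_exp_bound. lra.
  - apply RInt_exp_neg_le; lra.
Qed.

Lemma ex_RInt_integrand j a b : 0 < a -> a <= b -> ex_RInt (integrand j) a b.
Proof.
  intros Ha Hab. apply (ex_RInt_continuous (V:=R_CompleteNormedModule)). intros t Ht.
  rewrite Rmin_left, Rmax_right in Ht by lra.
  pose proof (exp_ineq1 t ltac:(lra)). pose proof PI_bounds.
  apply ex_derive_continuous_R. unfold integrand. auto_derive. repeat split; lra.
Qed.

Lemma RInt_integrand_split j N a b : 0 < a <= b ->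
  @eq R (RInt (integrand j) a b)
    (RInt (fun t => im_pow (2 * j) t * exp_geom_sum N t) a b
     + RInt (fun t => im_pow (2 * j) t * exp (- (INR N * t)) / (exp t - 1)) a b).
Proof.
  intros Hab. rewrite <- RInt_plus_R.
  - apply RInt_ext_R. intros x Hx. rewrite Rmin_left, Rmax_right in Hx by lra.
    rewrite integrand_im_pow by lra. unfold Rdiv at 1.
    rewrite (inv_exp_sub_1_split N x), Rmult_plus_distr_l by lra.
    unfold Rdiv. rewrite Rmult_assoc. reflexivity.
  - apply ex_RInt_continuous_R, continuous_im_pow_exp_geom_sum.
  - apply (ex_RInt_continuous (V:=R_CompleteNormedModule)). intros z Hz.
    rewrite Rmin_left, Rmax_right in Hz by lra. apply continuous_im_pow_div. lra.
Qed.

Definition integrand_err_scale (j : nat) : R :=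
  laplace_err_const j * INR (fact (S (2 * j))) * exp PI + (PI + 1) ^ (2 * j).
Definition integrand_err_const (j : nat) : R :=
  alt_cos_coef_const (2 * j) + INR (2 * j) * INR (fact (2 * j)) * exp PI.

Lemma integrand_err_scale_ge0 j : 0 <= integrand_err_scale j.
Proof.
  unfold integrand_err_scale. pose proof (laplace_err_const_ge0 j).
  pose proof (pos_INR (fact (S (2 * j)))).
  pose proof (exp_pos PI). pose proof PI_bounds.
  assert (0 <= (PI + 1) ^ (2 * j)) by (apply pow_le; lra).
  assert (0 <= INR (fact (S (2 * j))) * exp PI) by (apply Rmult_le_pos; lra).
  pose proof (Rmult_le_pos _ _ H H4). lra.
Qed.

Lemma integrand_err_scale_bound j a b : 0 < a -> a <= b ->
  laplace_err_const j * exp (- b) * (PI + b) ^ (2 * j) + a * (PI + 1) ^ (2 * j)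
  <= integrand_err_scale j * (a + / b).
Proof.
  intros Ha Hab. pose proof PI_bounds.
  pose proof (exp_neg_mul_pow_le PI b (2 * j) ltac:(lra) ltac:(lra)) as Ed.
  unfold integrand_err_scale. pose proof (laplace_err_const_ge0 j).
  assert (0 <= INR (fact (S (2 * j))) * exp PI)
    by (apply Rmult_le_pos; [apply pos_INR | apply Rlt_le, exp_pos]).
  assert (0 <= (PI + 1) ^ (2 * j)) by (apply pow_le; lra).
  assert (0 < / b) by (apply Rinv_0_lt_compat; lra).
  assert (laplace_err_const j * (exp (- b) * (PI + b) ^ (2 * j))
          <= laplace_err_const j * (INR (fact (S (2 * j))) * exp PI * / b))
    by (apply Rmult_le_compat_l; assumption).
  assert (0 <= laplace_err_const j * (INR (fact (S (2 * j))) * exp PI) * a)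
    by (apply Rmult_le_pos; [apply Rmult_le_pos|]; lra).
  assert (0 <= (PI + 1) ^ (2 * j) * / b) by (apply Rmult_le_pos; lra).
  lra.
Qed.

Lemma integrand_err_const_ge0 j : 0 <= integrand_err_const j.
Proof.
  unfold integrand_err_const. pose proof (alt_cos_coef_const_ge0 (2 * j)).
  pose proof (pos_INR (2 * j)).
  pose proof (pos_INR (fact (2 * j))). pose proof (exp_pos PI).
  assert (0 <= INR (2 * j) * INR (fact (2 * j)) * exp PI)
    by (apply Rmult_le_pos; [apply Rmult_le_pos|]; lra).
  lra.
Qed.

Lemma closed_form_eq j :
  INR (2 * j) * PI ^ S (2 * j) / (2 * INR (S (2 * j))) = INR j * PI ^ (2 * j + 1) / (2 * INR j + 1).
Proof.
  replace (2 * j + 1)%nat with (S (2 * j)) by lia. rewrite S_INR, mult_INR. simpl INR.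
  pose proof (pos_INR j). field. lra.
Qed.

Lemma RInt_integrand_error j N a b : (2 <= N)%nat -> 0 < a <= 1 -> a <= b ->
  Rabs (RInt (integrand j) a b - INR j * PI ^ (2 * j + 1) / (2 * INR j + 1))
  <= INR N * integrand_err_scale j * (a + / b) + integrand_err_const j / (INR N - 1).
Proof.
  intros HN Ha Hab.
  assert (HN1 : 1 <= INR N - 1) by (assert (2 <= INR N) by (apply (le_INR 2); lia); lra).
  rewrite (RInt_integrand_split j N) by lra. rewrite <- closed_form_eq.
  pose proof (RInt_im_pow_exp_geom_sum_approx j N a b ltac:(lra) ltac:(lra)) as E1.
  pose proof (alt_cos_coef_sum_approx (2 * j) N ltac:(lia)) as E2.
  pose proof (RInt_remainder_bound (2 * j) N a b HN ltac:(lra)) as E3.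
  pose proof (integrand_err_scale_bound j a b ltac:(lra) Hab) as Hscale.
  set (G := RInt (fun t => im_pow (2 * j) t * exp_geom_sum N t) a b) in *.
  set (Rm := RInt (fun t => im_pow (2 * j) t * exp (- (INR N * t)) / (exp t - 1)) a b) in *.
  set (T := alt_cos_coef_sum (2 * j) N) in *.
  set (l := INR (2 * j) * PI ^ S (2 * j) / (2 * INR (S (2 * j)))) in *.
  assert (Hsplit : Rabs (G + Rm - l) <= Rabs (G - T) + Rabs (T - l) + Rabs Rm).
  { replace (G + Rm - l) with ((G - T) + (T - l) + Rm) by ring.
    eapply Rle_trans; [apply Rabs_triang|]. pose proof (Rabs_triang (G - T) (T - l)). lra. }
  assert (Hcos : alt_cos_coef_const (2 * j) / (INR N + 1 / 2)
    <= alt_cos_coef_const (2 * j) / (INR N - 1))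
    by (apply Rmult_le_compat_l; [apply alt_cos_coef_const_ge0 | apply Rinv_le_contravar; lra]).
  assert (INR N * (laplace_err_const j * exp (- b) * (PI + b) ^ (2 * j) + a * (PI + 1) ^ (2 * j))
          <= INR N * (integrand_err_scale j * (a + / b)))
    by (apply Rmult_le_compat_l; [apply pos_INR | exact Hscale]).
  unfold integrand_err_const.
  replace ((alt_cos_coef_const (2 * j) + INR (2 * j) * INR (fact (2 * j)) * exp PI) / (INR N - 1))
    with (alt_cos_coef_const (2 * j) / (INR N - 1)
          + INR (2 * j) * INR (fact (2 * j)) * exp PI / (INR N - 1))
    by (field; lra).
  lra.
Qed.

Theorem lemma1 (j : nat) :
  improper_integral_0_inf
    (fun t => (PI ^ 2 + t ^ 2) ^ j / (exp t - 1)
              * sin (2 * INR j * atan (t / PI)))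
    (INR j * PI ^ (2 * j + 1) / (2 * INR j + 1)).
Proof.
  apply (improper_integral_0_inf_of_bound (integrand j) _
           (integrand_err_const j) (integrand_err_scale j)).
  - apply integrand_err_const_ge0.
  - apply integrand_err_scale_ge0.
  - apply ex_RInt_integrand.
  - apply RInt_integrand_error.
Qed.
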